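(* Let $G=(V,E)$ be an infinite, connected, locally finite, vertex-transitive graph, $o\in V$, $\Gamma\subset\operatorname{Aut}(G)$ a group acting transitively on $V$, and $\mathbb{P}$ a $\Gamma$-invariant and ergodic probability measure on $\mathbb{R}^V$ with $\mathbb{E}|s(o)|<\infty$. If $s$ has law $\mathbb{P}$ and $\mathbb{P}\{s\text{ stabilizes}\}=1$, then the odometer $u_\infty$ of $s$ has $\Gamma$-invariant law. Moreover, if $\mathbb{E}\,s(o)=1$, then almost surely $s_\infty\equiv 1$ and $\Delta u_\infty=1-s$.
   Context: $\Delta u(x)=\sum_{y\sim x}(u(y)-u(x))$. For $s:V\to\mathbb{R}$, $\mathcal{F}_s=\{f\ge0: s+\Delta f\le1\}$; $s$ stabilizes if $\mathcal{F}_s\ne\emptyset$; its odometer is $u_\infty(x)=\inf\{f(x):f\in\mathcal{F}_s\}$ and its stabilization is $s_\infty=s+\Delta u_\infty$. A random function has $\Gamma$-invariant law if its law is preserved by $(T_\alpha f)(x)=f(\alpha^{-1}x)$ for all $\alpha\in\Gamma$. *)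

From HB Require Import structures.
From mathcomp Require Import all_boot all_order all_algebra.
From mathcomp Require Import all_classical all_reals all_analysis.
From Stdlib Require Import Relations.
Set Implicit Arguments. Unset Strict Implicit. Unset Printing Implicit Defensive.
Import Order.TTheory GRing.Theory Num.Theory.
Local Open Scope classical_set_scope.
Local Open Scope ring_scope.

(* A locally finite graph on a vertex type V is given by its (finite)
   neighbour lists: y ~ x  iff  y \in nbrs x. *)
Section Graph.
Variables (V : choiceType) (nbrs : V -> seq V).

Definition adj (x y : V) : Prop := y \in nbrs x.

Definition simple_graph : Prop :=
  (forall x, uniq (nbrs x)) /\ (forall x, x \notin nbrs x) /\
  (forall x y, adj x y -> adj y x).

Definition connected_graph : Prop := forall x y, clos_refl_trans V adj x y.

Definition infinite_graph : Prop := infinite_set [set: V].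

Definition graph_automorphism (a : V -> V) : Prop :=
  bijective a /\ forall x y, adj x y <-> adj (a x) (a y).

Definition aut_subgroup (Gam : set (V -> V)) : Prop :=
  (forall a, Gam a -> graph_automorphism a) /\ Gam id /\
  (forall a b, Gam a -> Gam b -> Gam (a \o b)) /\
  (forall a, Gam a -> exists b, Gam b /\ cancel a b /\ cancel b a).

Definition transitive_action (Gam : set (V -> V)) : Prop :=
  forall x y, exists a, Gam a /\ a x = y.

Definition vertex_transitive : Prop :=
  forall x y, exists a, graph_automorphism a /\ a x = y.

Variable R : realType.

Definition lap (u : V -> R) (x : V) : R := \sum_(y <- nbrs x) (u y - u x).

Definition stab_set (s : V -> R) : set (V -> R) :=
  [set f | (forall x, 0 <= f x) /\ (forall x, s x + lap f x <= 1)].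

Definition stabilizes (s : V -> R) : Prop := stab_set s !=set0.

Definition odometer (s : V -> R) : V -> R :=
  fun x => inf [set f x | f in stab_set s].

Definition stabilization (s : V -> R) : V -> R :=
  fun x => s x + lap (odometer s) x.

Definition coord_sets : set (set (V -> R)) :=
  [set A | exists x (B : set R), measurable B /\ A = [set f | B (f x)]].

Definition prod_measurable (A : set (V -> R)) : Prop := <<s coord_sets>> A.

(* translation action (T_a f)(x) = f (a^{-1} x), with b = a^{-1} *)
Definition shift (b : V -> V) (f : V -> R) : V -> R := f \o b.

Section Random.
Variables (d : measure_display) (Omega : measurableType d)
  (P : probability Omega R).

Definition random_field (X : Omega -> V -> R) : Prop :=
  forall x, measurable_fun setT (fun w => X w x).

Definition invariant_law (Gam : set (V -> V)) (X : Omega -> V -> R) : Prop :=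
  forall a b, Gam a -> cancel a b -> cancel b a ->
  forall A, prod_measurable A ->
    P (X @^-1` A) = P ((fun w => shift b (X w)) @^-1` A).

Definition ergodic_law (Gam : set (V -> V)) (X : Omega -> V -> R) : Prop :=
  forall A, prod_measurable A ->
  (forall a b, Gam a -> cancel a b -> cancel b a ->
     [set f | A (shift b f)] = A) ->
  P (X @^-1` A) = 0%E \/ P (X @^-1` A) = 1%E.
End Random.
End Graph.

From Pilot Require Import Defs.
From HB Require Import structures.
From mathcomp Require Import all_boot all_order all_algebra.
From mathcomp Require Import all_classical all_reals all_analysis.
From Stdlib Require Import Relations.
From mathcomp Require Import lra measurable_realfun.
Import Order.TTheory GRing.Theory Num.Theory.
Import numFieldNormedType.Exports.
Local Open Scope classical_set_scope.
Local Open Scope ring_scope.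
Set Implicit Arguments. Unset Strict Implicit. Unset Printing Implicit Defensive.

(* The odometer u is the limit of the nondecreasing iteration
   u_(n+1) = topple s u_n started at 0; this makes it a measurable function of s
   that commutes with graph automorphisms, so its law is Gam-invariant.
   Invariance also gives E[lap (min u n) o] = 0 for every n.  Since
   lap (min u n) o <= (1 - s o)^+ and equals lap u o for n large, Fatou's lemma
   yields E[(1 - s o)^+ - lap u o] <= E[(1 - s o)^+] = E[(1 - s o)^-], the last
   equality because E[s o] = 1.  When s stabilizes, (1 - s o)^+ - lap u o is
   (1 - s o)^- plus the nonnegative quantity 1 - s o - lap u o, which must
   therefore vanish almost surely.  Invariance carries this from o to every
   vertex, and a connected locally finite graph has countably many vertices. *)

Section Toppling.
Variables (V : choiceType) (nbrs : V -> seq V) (R : realType).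
Hypothesis nbrs_gt0 : forall z, (0 < size (nbrs z))%N.
Implicit Types (s u v f : V -> R).

Definition degree (z : V) : R := (size (nbrs z))%:R.

Lemma degree_gt0 z : 0 < degree z.
Proof. by rewrite ltr0n. Qed.

Lemma lapE (u : V -> R) z : lap nbrs u z = \sum_(y <- nbrs z) u y - degree z * u z.
Proof.
by rewrite /lap big_split /= sumrN big_const_seq count_predT iter_addr_0 mulr_natl.
Qed.

(* [topple s u z] is the least value at [z] that is nonnegative and makes the
   stability inequality at [z] hold, given the values of [u] at the neighbours. *)
Definition topple (s u : V -> R) (z : V) : R :=
  Num.max 0 ((s z - 1 + \sum_(y <- nbrs z) u y) / degree z).

Definition topple_iter (s : V -> R) (n : nat) : V -> R := iter n (topple s) 0.

Definition topple_lim (s : V -> R) (x : V) : R :=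
  sup (range (topple_iter s ^~ x)).

Definition topple_bounded (s : V -> R) (z : V) : Prop :=
  exists M, forall n, topple_iter s n z <= M.

Lemma topple_ge0 s u z : 0 <= topple s u z.
Proof. by rewrite le_max lexx. Qed.

Lemma sum_nbrs_le_of_topple s u z (M : R) :
  topple s u z <= M -> \sum_(y <- nbrs z) u y <= M * degree z - s z + 1.
Proof.
rewrite ge_max => /andP[_]; rewrite ler_pdivrMr ?degree_gt0 //; lra.
Qed.

Lemma stab_setE s f :
  stab_set nbrs s f <-> forall z, topple s f z <= f z.
Proof.
have stabz z : (s z + lap nbrs f z <= 1) =
    ((s z - 1 + \sum_(y <- nbrs z) f y) / degree z <= f z).
  by rewrite ler_pdivrMr ?degree_gt0 // lapE; apply/idP/idP; lra.
split=> [[f_ge0 f_stab] z|f_top]; first by rewrite ge_max f_ge0 -stabz f_stab.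
by split=> z; have := f_top z; rewrite ge_max -stabz => /andP[].
Qed.

Lemma le_topple s u v z :
  (forall y, u y <= v y) -> topple s u z <= topple s v z.
Proof.
move=> le_uv; rewrite ge_max le_max lexx /= le_max.
by rewrite ler_pM2r ?invr_gt0 ?degree_gt0 // lerD2l ler_sum ?orbT.
Qed.

Lemma topple_iter_ge0 s n z : 0 <= topple_iter s n z.
Proof. by case: n => //= n; apply: topple_ge0. Qed.

Lemma le_topple_iter s n m z : (n <= m)%N -> topple_iter s n z <= topple_iter s m z.
Proof.
have iterS k y : topple_iter s k y <= topple_iter s k.+1 y.
  elim: k y => [|k IHk] y /=; first exact: topple_ge0.
  exact/le_topple/IHk.
move=> /subnK <-; elim: (m - n)%N => // k IHk.
exact: le_trans IHk (iterS _ _).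
Qed.

Lemma topple_iter_le_stab s f n z : stab_set nbrs s f -> topple_iter s n z <= f z.
Proof.
move/stab_setE => f_top; elim: n z => [|n IHn] z /=.
  exact: le_trans (topple_ge0 _ _ _) (f_top z).
exact: le_trans (le_topple _ _ IHn) (f_top z).
Qed.

Lemma topple_bounded_adj s z y : y \in nbrs z ->
  topple_bounded s z -> topple_bounded s y.
Proof.
move=> yz [M leM]; exists (M * degree z - s z + 1) => n.
apply: le_trans (sum_nbrs_le_of_topple (leM n.+1)).
rewrite (big_rem y) //= lerDl; apply: sumr_ge0 => x _; exact: topple_iter_ge0.
Qed.

Lemma topple_bounded_connected s o : connected_graph nbrs ->
  topple_bounded s o -> forall x, topple_bounded s x.
Proof.
move=> conn bo x; elim: (conn o x) bo => [a b|//|a b c _ IHab _ IHbc].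
  exact: topple_bounded_adj.
by move/IHab/IHbc.
Qed.

Lemma stabilizes_topple_bounded s : stabilizes nbrs s -> forall z, topple_bounded s z.
Proof. by case=> f stab_f z; exists (f z) => n; apply: topple_iter_le_stab. Qed.

Section Limit.
Variables (s : V -> R) (z : V).
Hypothesis bounded_z : topple_bounded s z.

Let topple_iter_ubound : has_ubound (range (topple_iter s ^~ z)).
Proof. by case: bounded_z => M leM; exists M => _ [n _ <-]. Qed.

Lemma topple_iter_cvg : topple_iter s ^~ z @ \oo --> topple_lim s z.
Proof.
apply: nondecreasing_cvgn topple_iter_ubound => n m.
exact: le_topple_iter.
Qed.

Lemma topple_iter_le_lim n : topple_iter s n z <= topple_lim s z.
Proof. by apply: (ub_le_sup topple_iter_ubound); exists n. Qed.

Lemma topple_lim_ge0 : 0 <= topple_lim s z.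
Proof. exact: (le_trans (topple_iter_ge0 _ 0 _) (topple_iter_le_lim 0)). Qed.

End Limit.

Lemma topple_lim_stab s : (forall z, topple_bounded s z) ->
  stab_set nbrs s (topple_lim s).
Proof.
move=> bounded; apply/stab_setE => z; rewrite ge_max topple_lim_ge0 //=.
rewrite ler_pdivrMr ?degree_gt0 //.
have sum_cvg : (fun n => \sum_(y <- nbrs z) topple_iter s n y) @ \oo -->
    \sum_(y <- nbrs z) topple_lim s y.
  apply: (@cvg_big _ _ +%R 0 xpredT add_continuous) => // y _.
  exact: topple_iter_cvg.
suff : \sum_(y <- nbrs z) topple_lim s y <= topple_lim s z * degree z - s z + 1.
  by lra.
apply: (cvgr_to_le sum_cvg); apply: nearW => n.
exact/sum_nbrs_le_of_topple/(topple_iter_le_lim _ n.+1).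
Qed.

Lemma odometer_topple_lim s : stabilizes nbrs s -> odometer nbrs s = topple_lim s.
Proof.
move=> /stabilizes_topple_bounded bounded; apply/funext => x.
have stab_lim := topple_lim_stab bounded.
apply/eqP; rewrite eq_le; apply/andP; split.
  apply: ge_inf; first by exists 0 => _ [f [f_ge0 _] <-].
  by exists (topple_lim s).
apply: lb_le_inf; first by exists (topple_lim s x), (topple_lim s).
move=> _ [f stab_f <-]; apply: ge_sup; first by exists (topple_iter s 0 x), 0%N.
by move=> _ [n _ <-]; apply: topple_iter_le_stab.
Qed.

Lemma stab_set_odometer s : stabilizes nbrs s -> stab_set nbrs s (odometer nbrs s).
Proof.
move=> stab_s; rewrite odometer_topple_lim //.
exact/topple_lim_stab/stabilizes_topple_bounded.
Qed.

Lemma odometer_unstable s : ~ stabilizes nbrs s -> odometer nbrs s = 0.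
Proof.
move=> unstab; apply/funext => x; rewrite /odometer.
suff -> : [set f x | f in stab_set nbrs s] = set0 by rewrite inf0.
by apply/seteqP; split => // y [f stab_f _]; apply: unstab; exists f.
Qed.

Lemma odometer_ge0 s x : 0 <= odometer nbrs s x.
Proof.
have [stab_s|unstab] := pselect (stabilizes nbrs s).
  by rewrite odometer_topple_lim //; apply/topple_lim_ge0/stabilizes_topple_bounded.
by rewrite odometer_unstable.
Qed.

End Toppling.

Section Automorphism.
Variables (V : choiceType) (nbrs : V -> seq V) (R : realType).
Hypothesis nbrs_uniq : forall z, uniq (nbrs z).
Implicit Types (s f : V -> R).

Lemma graph_automorphism_inv (a b : V -> V) : cancel a b -> cancel b a ->
  graph_automorphism nbrs a -> graph_automorphism nbrs b.
Proof.
move=> ab ba [_ a_adj]; split; first by exists a.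
by move=> x y; rewrite (a_adj (b x) (b y)) !ba.
Qed.

Variable b : V -> V.
Hypothesis b_aut : graph_automorphism nbrs b.

Lemma perm_nbrs_aut z : perm_eq (nbrs (b z)) (map b (nbrs z)).
Proof.
have [[c bc cb] b_adj] := b_aut.
apply: uniq_perm; rewrite ?map_inj_uniq //; first exact: can_inj bc.
move=> y; rewrite -(cb y) (mem_map (can_inj bc)).
by apply/idP/idP => /(b_adj z (c y)).
Qed.

Lemma lap_comp (u : V -> R) z : lap nbrs (u \o b) z = lap nbrs u (b z).
Proof. by rewrite /lap (perm_big _ (perm_nbrs_aut z)) big_map. Qed.

Lemma stab_set_comp s f : stab_set nbrs (s \o b) (f \o b) <-> stab_set nbrs s f.
Proof.
have [[c bc cb] _] := b_aut.
split=> [[f_ge0 f_stab]|[f_ge0 f_stab]]; split=> x //=.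
- by rewrite -(cb x); apply: f_ge0.
- by rewrite -(cb x); have := f_stab (c x); rewrite /= lap_comp.
- by rewrite lap_comp; apply: f_stab.
Qed.

Lemma odometer_comp s : odometer nbrs (s \o b) = odometer nbrs s \o b.
Proof.
have [[c bc cb] _] := b_aut.
apply/funext => x; rewrite /odometer; congr inf.
apply/seteqP; split=> _ [f stab_f <-].
  exists (f \o c); last by rewrite /= bc.
  by apply/stab_set_comp; rewrite (_ : f \o c \o b = f) // funeqE => y /=; rewrite bc.
by exists (f \o b) => //; apply/stab_set_comp.
Qed.

End Automorphism.

Lemma stabilizes_topple_boundedE (V : choiceType) (nbrs : V -> seq V)
    (R : realType) (s : V -> R) x :
  (forall z, (0 < size (nbrs z))%N) -> connected_graph nbrs ->
  stabilizes nbrs s <-> topple_bounded nbrs s x.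
Proof.
move=> nbrs_gt0 conn; split=> [/stabilizes_topple_bounded|bx]; first exact.
exists (topple_lim nbrs s); apply: topple_lim_stab => //.
exact: topple_bounded_connected bx.
Qed.

Section Measurability.
Variables (V : choiceType) (nbrs : V -> seq V) (R : realType).
Variables (d : measure_display) (T : measurableType d) (X : T -> V -> R).
Hypothesis X_meas : forall x, measurable_fun setT (X ^~ x).

Lemma measurable_topple_iter n x :
  measurable_fun setT (fun w => topple_iter nbrs (X w) n x).
Proof.
elim: n x => [|n IHn] x /=; first exact: measurable_cst.
apply: measurable_maxr; first exact: measurable_cst.
apply: measurable_funM; last exact: measurable_cst.
apply: measurable_funD; last exact: measurable_sum.
by apply: measurable_funB => //; exact: measurable_cst.
Qed.

Lemma measurable_topple_bounded x :
  measurable [set w | topple_bounded nbrs (X w) x].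
Proof.
rewrite (_ : [set w | _] = \bigcup_(k : nat) \bigcap_(n : nat)
    (setT `&` (fun w => topple_iter nbrs (X w) n x) @^-1` `]-oo, k%:R]%classic)).
  apply: bigcupT_measurable => k; apply: bigcapT_measurable => n.
  exact: measurable_topple_iter (measurable_itv _).
apply/seteqP; split => w /=.
  case=> M leM; exists (Num.truncn `|M|).+1 => // n _ /=; split => //.
  rewrite in_itv /=; apply: le_trans (leM n) _.
  exact: le_trans (ler_norm M) (ltW (truncnS_gt _)).
by case=> k _ lek; exists k%:R => n; have [_] := lek n I; rewrite /= in_itv.
Qed.

Hypotheses (nbrs_gt0 : forall z, (0 < size (nbrs z))%N)
  (conn : connected_graph nbrs).

Lemma measurable_odometer x : measurable_fun setT (fun w => odometer nbrs (X w) x).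
Proof.
pose B := [set w | topple_bounded nbrs (X w) x].
apply: (@measurable_fun_cvg _ _ _ _ (fun n w => topple_iter nbrs (X w) n x * \1_B w)).
  move=> n; apply: measurable_funM; first exact: measurable_topple_iter.
  exact/measurable_indic/measurable_topple_bounded.
move=> w _; have stabE : stabilizes nbrs (X w) <-> B w.
  exact: stabilizes_topple_boundedE.
rewrite indicE; have [Bw|nBw] := pselect (B w).
  rewrite mem_set // (odometer_topple_lim nbrs_gt0) ?stabE //.
  under eq_fun do rewrite mulr1; exact: topple_iter_cvg.
rewrite memNset // odometer_unstable; last by rewrite stabE.
by under eq_fun do rewrite mulr0; exact: cvg_cst.
Qed.

End Measurability.

Definition configuration_space (V : choiceType) (R : realType) :=
  g_sigma_algebraType (@coord_sets V R).

Section ConfigurationSpace.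
Variables (V : choiceType) (R : realType).
Notation CS := (configuration_space V R).

Lemma measurable_configuration_fun d (T : measurableType d) (X : T -> V -> R) :
  (forall x, measurable_fun setT (X ^~ x)) -> measurable_fun setT (X : T -> CS).
Proof.
move=> X_meas; apply: (@measurability _ _ _ CS setT _ (@coord_sets V R)) => //.
move=> _ [_ [x [B [mB ->]]] <-].
exact: X_meas measurableT B mB.
Qed.

Lemma measurable_coord x : measurable_fun setT (fun f : CS => f x).
Proof. by move=> _ B mB; rewrite setTI; apply: sub_gen_smallest; exists x, B. Qed.

Lemma eq_law_ge0_integral d (T : measurableType d) (P : probability T R)
    (X Y : T -> CS) (h : CS -> R) :
  measurable_fun setT X -> measurable_fun setT Y ->
  (forall A : set CS, measurable A -> P (X @^-1` A) = P (Y @^-1` A)) ->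
  measurable_fun setT h -> (forall f, 0 <= h f) ->
  (\int[P]_w (h (X w))%:E = \int[P]_w (h (Y w))%:E)%E.
Proof.
move=> mX mY eq_law mh h_ge0.
have mh' : measurable_fun setT (EFin \o h) by exact/measurable_EFinP.
have h_ge0' : {in setT, forall f, (0 <= (EFin \o h) f)%E}.
  by move=> f _; rewrite lee_fin.
have := ge0_integral_pushforward mX P measurableT mh' h_ge0'.
have := ge0_integral_pushforward mY P measurableT mh' h_ge0'.
rewrite !preimage_setT => /= <- <-.
by apply: eq_measure_integral => A mA _; exact: eq_law.
Qed.

End ConfigurationSpace.

Section LaplacianBounds.
Variables (V : choiceType) (nbrs : V -> seq V) (R : realType).
Implicit Types (u : V -> R) (c : R).

Lemma lap_min_le u c z :
  lap nbrs (fun y => Num.min (u y) c) z <= Num.max (lap nbrs u z) 0.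
Proof.
rewrite /lap le_max; have [uz_le|c_lt] := leP (u z) c.
  by rewrite ler_sum // => y _; rewrite lerD2r ge_min lexx.
by rewrite sumr_le0 ?orbT // => y _; rewrite subr_le0 ge_min lexx orbT.
Qed.

Lemma lap_min_near u z :
  \forall n \near \oo, lap nbrs (fun y => Num.min (u y) n%:R) z = lap nbrs u z.
Proof.
apply: filterS (nbhs_infty_ger (\sum_(y <- z :: nbrs z) `|u y|)) => n le_n.
have le_u y : y \in z :: nbrs z -> u y <= n%:R.
  move=> yr; apply: le_trans (ler_norm _) (le_trans _ le_n).
  by rewrite (big_rem y) //= lerDl sumr_ge0.
apply: eq_big_seq => y yz.
by rewrite !min_l // le_u // inE ?eqxx ?yz ?orbT.
Qed.

Lemma lap_odometer_le (s : V -> R) z : (forall x, (0 < size (nbrs x))%N) ->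
  lap nbrs (odometer nbrs s) z <= Num.max (1 - s z) 0.
Proof.
move=> nbrs_gt0; rewrite le_max.
have [stab_s|unstab] := pselect (stabilizes nbrs s).
  by have [_ /(_ z)] := stab_set_odometer nbrs_gt0 stab_s; lra.
rewrite odometer_unstable // /lap big1_seq ?lexx ?orbT // => y _.
by rewrite subrr.
Qed.

End LaplacianBounds.

Section InvariantLaw.
Variables (V : choiceType) (nbrs : V -> seq V) (R : realType).
Hypotheses (nbrs_uniq : forall z, uniq (nbrs z))
  (nbrs_gt0 : forall z, (0 < size (nbrs z))%N) (conn : connected_graph nbrs).
Variable Gam : set (V -> V).
Hypotheses (Gam_aut : aut_subgroup nbrs Gam) (Gam_trans : transitive_action Gam).
Variables (d : measure_display) (Omega : measurableType d)
  (P : probability Omega R) (s : Omega -> V -> R).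
Hypotheses (s_rf : random_field s) (s_inv : invariant_law P Gam s).
Notation CS := (configuration_space V R).

Lemma Gam_inv_aut a b : Gam a -> cancel a b -> cancel b a ->
  graph_automorphism nbrs b.
Proof. by move=> Ga ab ba; exact: graph_automorphism_inv ab ba (Gam_aut.1 a Ga). Qed.

Lemma Gam_shift_to y z : exists a b,
  [/\ Gam a, cancel a b, cancel b a, graph_automorphism nbrs b & b z = y].
Proof.
have [a [Ga az]] := Gam_trans y z.
have [b [_ [ab ba]]] := Gam_aut.2.2.2 a Ga.
exists a, b; split => //; last by rewrite -az ab.
exact: Gam_inv_aut Ga ab ba.
Qed.

Lemma measurable_odometer_coord x :
  measurable_fun setT (fun f : CS => odometer nbrs f x).
Proof. exact: measurable_odometer (@measurable_coord V R) nbrs_gt0 conn x. Qed.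

Lemma measurable_odometer_map :
  measurable_fun setT (@odometer V nbrs R : CS -> CS).
Proof. by apply: measurable_configuration_fun; exact: measurable_odometer_coord. Qed.

Lemma odometer_random_field : random_field (fun w => odometer nbrs (s w)).
Proof. exact: measurable_odometer s_rf nbrs_gt0 conn. Qed.

Lemma odometer_invariant_law : invariant_law P Gam (fun w => odometer nbrs (s w)).
Proof.
move=> a b Ga ab ba A mA.
have mA' : prod_measurable (@odometer V nbrs R @^-1` A : set CS).
  by rewrite -[_ @^-1` _]setTI; apply: measurable_odometer_map.
rewrite (s_inv Ga ab ba mA') /Defs.shift /preimage /=.
by under eq_set do rewrite (odometer_comp nbrs_uniq (Gam_inv_aut Ga ab ba)).
Qed.

Lemma measurable_shifted_field b :
  measurable_fun setT (fun w => Defs.shift b (s w) : CS).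
Proof. by apply: measurable_configuration_fun => x; apply: s_rf. Qed.

Lemma measurable_lap_odometer_neq z :
  measurable [set f : CS | lap nbrs (odometer nbrs f) z <> 1 - f z].
Proof.
pose g (f : CS) := lap nbrs (odometer nbrs f) z - (1 - f z).
have mg : measurable_fun setT g.
  apply: measurable_funB.
    apply: measurable_sum => y; apply: measurable_funB;
    exact: measurable_odometer_coord.
  by apply: measurable_funB; [exact: measurable_cst|exact: measurable_coord].
rewrite (_ : [set f | _] = setT `&` g @^-1` ~` [set 0]).
  exact: mg measurableT _ (measurableC (measurable_set1 0)).
apply/seteqP; split => f /=.
  by move=> neq; split => // /eqP; rewrite subr_eq0 => /eqP.
by case=> _ g_neq0 eq; apply: g_neq0; rewrite /g eq subrr.
Qed.

Lemma ae_lap_odometer_transfer o x :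
  {ae P, forall w, lap nbrs (odometer nbrs (s w)) o = 1 - s w o} ->
  {ae P, forall w, lap nbrs (odometer nbrs (s w)) x = 1 - s w x}.
Proof.
pose G z : set CS := [set f | lap nbrs (odometer nbrs f) z <> 1 - f z].
have ms z : measurable (s @^-1` G z).
  rewrite -[_ @^-1` _]setTI.
  exact: measurable_configuration_fun measurableT _ (measurable_lap_odometer_neq z).
have [a [b [Ga ab ba b_aut box]]] := Gam_shift_to x o.
move=> /(negligibleP _ (ms o)) Po; apply/(negligibleP _ (ms x)).
have -> : s @^-1` G x = (fun w => Defs.shift b (s w)) @^-1` G o.
  apply/seteqP; split=> w; rewrite /G /= /Defs.shift;
  by rewrite (odometer_comp nbrs_uniq b_aut) (lap_comp nbrs_uniq b_aut) /= box.
rewrite -Po; have := s_inv Ga ab ba (measurable_lap_odometer_neq o); exact: esym.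
Qed.

Section Root.
Variable o : V.

Lemma integral_min_odometer n y :
  (\int[P]_w (Num.min (odometer nbrs (s w) y) n%:R)%:E =
   \int[P]_w (Num.min (odometer nbrs (s w) o) n%:R)%:E)%E.
Proof.
have [a [b [Ga ab ba b_aut <-]]] := Gam_shift_to y o.
have mh : measurable_fun setT (fun f : CS => Num.min (odometer nbrs f o) n%:R).
  by apply: measurable_minr; [exact: measurable_odometer_coord|exact: measurable_cst].
have h_ge0 (f : CS) : 0 <= Num.min (odometer nbrs f o) n%:R.
  by rewrite le_min odometer_ge0 ?ler0n.
have mS : measurable_fun setT (s : Omega -> CS) by exact: measurable_configuration_fun.
have eq_law := s_inv Ga ab ba.
rewrite [RHS](eq_law_ge0_integral mS (measurable_shifted_field b) eq_law mh h_ge0).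
by apply: eq_integral => w _; rewrite /Defs.shift (odometer_comp nbrs_uniq b_aut).
Qed.

Lemma integrable_min_odometer n y :
  P.-integrable setT (EFin \o fun w => Num.min (odometer nbrs (s w) y) n%:R).
Proof.
apply: measurable_bounded_integrable => //.
- by rewrite ltey_eq fin_num_measure.
- by apply: measurable_minr; [exact: odometer_random_field|exact: measurable_cst].
exists n%:R; split; first exact: num_real.
move=> M nM w _; apply: le_trans (ltW nM).
by rewrite ger0_norm ?le_min ?odometer_ge0 ?ler0n // ge_min lexx orbT.
Qed.

Let lap_trunc n w := lap nbrs (fun y => Num.min (odometer nbrs (s w) y) n%:R) o.

Let lap_truncE n : EFin \o lap_trunc n = fun w =>
  (\sum_(y <- nbrs o) ((Num.min (odometer nbrs (s w) y) n%:R)%:E -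
                       (Num.min (odometer nbrs (s w) o) n%:R)%:E))%E.
Proof.
apply/funext => w; rewrite /= /lap_trunc /lap -sumEFin.
by apply: eq_bigr => y _; rewrite EFinD.
Qed.

Lemma integrable_lap_trunc n : P.-integrable setT (EFin \o lap_trunc n).
Proof.
rewrite lap_truncE; apply: integrable_sum => // y _.
by apply: integrableB => //; exact: integrable_min_odometer.
Qed.

Lemma integral_lap_trunc n : (\int[P]_w (lap_trunc n w)%:E = 0)%E.
Proof.
rewrite -[LHS]/(\int[P]_w (EFin \o lap_trunc n) w)%E lap_truncE integral_sum //.
  apply: big1_seq => y _.
  rewrite integralB_EFin //; try exact: integrable_min_odometer.
  rewrite integral_min_odometer subee //.
  by apply: integrable_fin_num => //; exact: integrable_min_odometer.
by move=> y; apply: integrableB => //; exact: integrable_min_odometer.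
Qed.

Section MeanOne.
Hypotheses (s_int : P.-integrable setT (fun w => (s w o)%:E))
  (s_mean : (\int[P]_w (s w o)%:E)%E = 1%E)
  (s_stab : {ae P, forall w, stabilizes nbrs (s w)}).

Let deficit_pos w := Num.max (1 - s w o) 0.
Let deficit_neg w := Num.max (s w o - 1) 0.

Let deficit_posE : EFin \o deficit_pos = (fun w => (1 - s w o)%:E)^\+%E.
Proof. by apply/funext => w; rewrite /= funeposE EFin_max. Qed.

Let deficit_negE : EFin \o deficit_neg = (fun w => (1 - s w o)%:E)^\-%E.
Proof. by apply/funext => w; rewrite /= funenegE -EFinN EFin_max opprB. Qed.

Let integrable_deficit : P.-integrable setT (fun w => (1 - s w o)%:E).
Proof.
under eq_fun do rewrite EFinB.
exact: integrableB (finite_measure_integrable_cst _ _ _) s_int.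
Qed.

Let integrable_deficit_pos : P.-integrable setT (EFin \o deficit_pos).
Proof. by rewrite deficit_posE; exact: integrable_funepos. Qed.

Let integrable_deficit_neg : P.-integrable setT (EFin \o deficit_neg).
Proof. by rewrite deficit_negE; exact: integrable_funeneg. Qed.

Lemma integral_deficit_pos_neg :
  (\int[P]_w (deficit_pos w)%:E = \int[P]_w (deficit_neg w)%:E)%E.
Proof.
have mean0 : (\int[P]_w (1 - s w o)%:E = 0)%E.
  under eq_integral do rewrite EFinB.
  rewrite integralB_EFin //; last exact: finite_measure_integrable_cst.
  rewrite integral_cst // [X in (1 * X)%E](_ : _ = 1%E); last exact: probability_setT.
  by rewrite mul1e s_mean subee.
move: mean0; rewrite integralE -deficit_posE -deficit_negE => /eqP.
rewrite sube_eq ?add0e; first by move/eqP.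
- exact: integrable_fin_num.
- by rewrite fin_num_adde_defl // integrable_fin_num.
Qed.

Let lap_odo w := lap nbrs (odometer nbrs (s w)) o.

Let measurable_lap_odo : measurable_fun setT lap_odo.
Proof.
by apply: measurable_sum => y; apply: measurable_funB; exact: odometer_random_field.
Qed.

Let measurable_deficit_pos : measurable_fun setT deficit_pos.
Proof. exact/measurable_EFinP/(measurable_int _ integrable_deficit_pos). Qed.

Let measurable_deficit_neg : measurable_fun setT deficit_neg.
Proof. exact/measurable_EFinP/(measurable_int _ integrable_deficit_neg). Qed.

Lemma integral_deficit_lap_le :
  (\int[P]_w (deficit_pos w - lap_odo w)%:E <= \int[P]_w (deficit_pos w)%:E)%E.
Proof.
pose g n w := (deficit_pos w - lap_trunc n w)%:E.
have mg n : measurable_fun setT (g n).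
  apply/measurable_EFinP/measurable_funB => //.
  exact/measurable_EFinP/(measurable_int _ (integrable_lap_trunc n)).
have g_ge0 n w : setT w -> (0 <= g n w)%E.
  move=> _; rewrite lee_fin subr_ge0.
  have /le_trans -> // := lap_min_le nbrs (odometer nbrs (s w)) n%:R o.
  by rewrite ge_max (lap_odometer_le _ _ nbrs_gt0) le_max lexx orbT.
have g_lim w : limn_einf (g ^~ w) = (deficit_pos w - lap_odo w)%:E.
  have g_cvg : g ^~ w @ \oo --> (deficit_pos w - lap_odo w)%:E.
    apply: cvg_near_cst.
    apply: filterS (lap_min_near nbrs (odometer nbrs (s w)) o) => n /= e.
    by rewrite /g /lap_trunc e.
  rewrite is_cvg_limn_einfE; last by apply/cvg_ex; eexists; exact: g_cvg.
  exact: cvg_lim g_cvg.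
have int_g n : (\int[P]_w g n w = \int[P]_w (deficit_pos w)%:E)%E.
  rewrite /g; under eq_integral do rewrite EFinB.
  rewrite integralB_EFin // ?integral_lap_trunc ?sube0 //; exact: integrable_lap_trunc.
under eq_integral do rewrite -g_lim.
apply: le_trans (fatou P measurableT mg g_ge0) _.
under eq_fun do rewrite int_g.
rewrite is_cvg_limn_einfE; last exact: is_cvg_cst.
by rewrite lim_cst.
Qed.

Let defect w := Num.max (1 - s w o - lap_odo w) 0.

Lemma deficit_lapE w : stabilizes nbrs (s w) ->
  deficit_pos w - lap_odo w = defect w + deficit_neg w.
Proof.
move=> stab_w; have [_ /(_ o) le1] := stab_set_odometer nbrs_gt0 stab_w.
rewrite -/(lap_odo w) in le1.
rewrite /defect (@max_l _ _ _ 0); last lra.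
rewrite /deficit_pos /deficit_neg.
have [s_le1|s_gt1] := lerP (s w o) 1.
  by rewrite max_l ?max_r; lra.
by rewrite max_r ?max_l; lra.
Qed.

Let defect_ge0 w : 0 <= defect w.
Proof. by rewrite le_max lexx orbT. Qed.

Let measurable_defect : measurable_fun setT defect.
Proof.
apply: measurable_maxr (measurable_cst _).
apply: measurable_funB measurable_lap_odo.
by apply: measurable_funB; [exact: measurable_cst|exact: s_rf].
Qed.

Lemma integral_defect : (\int[P]_w (defect w)%:E = 0)%E.
Proof.
have splitE : (\int[P]_w (deficit_pos w - lap_odo w)%:E =
    \int[P]_w (defect w)%:E + \int[P]_w (deficit_neg w)%:E)%E.
  rewrite -ge0_integralD //; last 4 first.
  - by move=> w _; rewrite lee_fin defect_ge0.
  - exact/measurable_EFinP.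
  - by move=> w _; rewrite lee_fin le_max lexx orbT.
  - exact/measurable_EFinP.
  apply: ae_eq_integral => //.
  - exact/measurable_EFinP/measurable_funB.
  - by apply: emeasurable_funD; exact/measurable_EFinP.
  by apply: filterS s_stab => w stab_w _; rewrite deficit_lapE // EFinD.
have := integral_deficit_lap_le; rewrite splitE integral_deficit_pos_neg.
rewrite -[X in (_ <= X)%E]add0e leeD2rE ?integrable_fin_num // => le0.
by apply/eqP; rewrite eq_le le0 integral_ge0 // => w _; rewrite lee_fin.
Qed.

Lemma ae_lap_odometer :
  {ae P, forall w, lap nbrs (odometer nbrs (s w)) o = 1 - s w o}.
Proof.
have : ae_eq P setT (EFin \o defect) (cst 0%E).
  apply/(ae_eq_integral_abs P measurableT); first exact/measurable_EFinP.
  rewrite -integral_defect; apply: eq_integral => w _.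
  by rewrite /= ger0_norm ?defect_ge0.
apply: filterS2 s_stab => w stab_w /(_ I) [] defect0.
have [_ /(_ o) le1] := stab_set_odometer nbrs_gt0 stab_w.
have : 1 - s w o - lap_odo w <= defect w by rewrite le_max lexx.
by rewrite defect0 -/(lap_odo w) in le1 *; lra.
Qed.

End MeanOne.
End Root.
End InvariantLaw.

Section ConnectedGraph.
Variables (V : choiceType) (nbrs : V -> seq V).
Hypothesis conn : connected_graph nbrs.

Lemma nbrs_size_gt0 : infinite_graph V -> forall z, (0 < size (nbrs z))%N.
Proof.
move=> V_inf z; rewrite lt0n size_eq0; apply/negP => /eqP nbrs_z.
have reach_z a b : clos_refl_trans V (adj nbrs) a b -> a = z -> b = z.
  elim=> [a' b'|//|a' b' c' _ IHab _ IHbc /IHab/IHbc //].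
  by rewrite /adj => + az; rewrite az nbrs_z.
apply: V_inf; rewrite (_ : [set: V] = [set z]); first exact: finite_set1.
by apply/seteqP; split => // y _; exact: reach_z (conn z y) erefl.
Qed.

Fixpoint ball_seq (o : V) (n : nat) : seq V :=
  if n is k.+1 then ball_seq o k ++ flatten (map nbrs (ball_seq o k)) else [:: o].

Lemma ball_seq_exhaust o x : exists n, x \in ball_seq o n.
Proof.
suff reach a b n : clos_refl_trans V (adj nbrs) a b -> a \in ball_seq o n ->
    exists m, b \in ball_seq o m.
  by apply: (reach o x 0%N (conn o x)); rewrite mem_head.
move=> ab; elim: ab n => [a' b' ab' n a'n|a' n a'n|a' b' c' _ IHab _ IHbc n a'n].
- exists n.+1; rewrite /= mem_cat; apply/orP; right.
  by apply/flattenP; exists (nbrs a') => //; exact: map_f.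
- by exists n.
- by have [m b'm] := IHab n a'n; exact: IHbc m b'm.
Qed.

Lemma ae_forall_connected (R : realType) d (Omega : measurableType d)
    (P : probability Omega R) (Q : V -> Omega -> Prop) :
  (forall x, {ae P, forall w, Q x w}) -> {ae P, forall w x, Q x w}.
Proof.
move=> aeQ; have [[x0 _]|V0] := pselect (exists x0 : V, True); last first.
  by apply: aeW => w x; exfalso; apply: V0; exists x.
have aeQ_seq (l : seq V) : {ae P, forall w x, x \in l -> Q x w}.
  elim: l => [|a l IHl]; first by apply: aeW => w x.
  apply: filterS2 (aeQ a) IHl => w Qa Ql x.
  by rewrite inE => /predU1P[->|/Ql].
apply: filterS (ae_foralln (fun n => aeQ_seq (ball_seq x0 n))) => w Qw x.
by have [n xn] := ball_seq_exhaust x0 x; exact: Qw n x xn.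
Qed.

End ConnectedGraph.

Theorem lemma4p3 (V : choiceType) (nbrs : V -> seq V)
  (Gam : set (V -> V)) (o : V)
  (R : realType) (d : measure_display) (Omega : measurableType d)
  (P : probability Omega R) (s : Omega -> V -> R) :
  simple_graph nbrs -> infinite_graph V -> connected_graph nbrs ->
  vertex_transitive nbrs ->
  aut_subgroup nbrs Gam -> transitive_action Gam ->
  random_field s ->
  invariant_law P Gam s -> ergodic_law P Gam s ->
  P.-integrable setT (fun w => (s w o)%:E) ->
  {ae P, forall w, stabilizes nbrs (s w)} ->
  (random_field (fun w => odometer nbrs (s w)) /\
   invariant_law P Gam (fun w => odometer nbrs (s w))) /\
  ((\int[P]_w (s w o)%:E)%E = 1%E ->
   {ae P, forall w, (forall x, stabilization nbrs (s w) x = 1) /\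
                    (forall x, lap nbrs (odometer nbrs (s w)) x = 1 - s w x)}).
Proof.
move=> [nbrs_uniq _] V_inf conn _ Gam_aut Gam_trans s_rf s_inv _ s_int s_stab.
have nbrs_gt0 := nbrs_size_gt0 conn V_inf.
split; first split.
- exact: odometer_random_field.
- exact: odometer_invariant_law.
move=> s_mean.
have lap_root := ae_lap_odometer nbrs_uniq nbrs_gt0 conn Gam_aut Gam_trans
  s_rf s_inv s_int s_mean s_stab.
have lap_odometer x := ae_lap_odometer_transfer nbrs_uniq nbrs_gt0 conn Gam_aut
  Gam_trans s_rf s_inv x lap_root.
apply: filterS (ae_forall_connected conn lap_odometer) => w lap_w.
by split=> // x; rewrite /stabilization lap_w addrC subrK.
Qed.
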